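(* Let $n\ge 2$ and $L=2^n+k$ with $0\le k<2^n$. (i) If $0\le k<2^{n-1}$, then among the words of length $L$ in $\mathrm{Sub}_\tau$ there are exactly two right-special words: the suffix of length $L$ of $\tau^n(a)$, whose extensions are by $x$, $y$ and $z$; and the suffix of length $L$ of the word $\tau^{n-2}(a)\,\tau^{n-2}(x)\,\tau^{n-1}(a)$, whose extensions are by $\tau^{n-2}(x)$ and by $\tau^{n-1}(x)$. (ii) If $2^{n-1}\le k<2^n$, then there is exactly one right-special word of length $L$ in $\mathrm{Sub}_\tau$, namely the suffix of length $L$ of $\tau^n(a)$, whose extensions are by $x$, $y$ and $z$.
   Context: Let $\mathcal{A}=\{a,x,y,z\}$ and let $\tau$ be the substitution (monoid morphism on finite words over $\mathcal{A}$) defined by $\tau(a)=axa$, $\tau(x)=y$, $\tau(y)=z$, $\tau(z)=x$; thus $\tau^m(x)$ equals $x$, $y$, $z$ according as $m\equiv 0,1,2 \pmod 3$. For a finite word $w$, $\mathrm{Sub}(w)$ denotes the set of finite (contiguous) subwords of $w$. Let $\mathrm{Sub}_\tau=\bigcup_{s\in\mathcal{A},\,n\in\mathbb{N}\cup\{0\}}\mathrm{Sub}(\tau^n(s))$. For $w\in\mathrm{Sub}_\tau$ and $s\in\mathcal{A}$, $w$ can be extended by $s$ if $ws\in\mathrm{Sub}_\tau$. A word $w\in\mathrm{Sub}_\tau$ is right-special if it can be extended by more than one letter of $\mathcal{A}$. *)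

From HB Require Import structures.
From mathcomp Require Import all_boot.
Set Implicit Arguments. Unset Strict Implicit. Unset Printing Implicit Defensive.

Inductive letter := la | lx | ly | lz.

Definition letter_eqb (u v : letter) : bool :=
  match u, v with
  | la, la | lx, lx | ly, ly | lz, lz => true
  | _, _ => false
  end.

Lemma letter_eqP : Equality.axiom letter_eqb.
Proof. by case; case; constructor. Qed.

HB.instance Definition _ := hasDecEq.Build letter letter_eqP.

Definition word := seq letter.

Definition tau_letter (s : letter) : word :=
  match s with
  | la => [:: la; lx; la]
  | lx => [:: ly]
  | ly => [:: lz]
  | lz => [:: lx]
  end.

Definition tau (w : word) : word := flatten (map tau_letter w).

Definition tauN (n : nat) (w : word) : word := iter n tau w.

Definition in_Sub_tau (w : word) : Prop :=
  exists (s : letter) (n : nat), infix w (tauN n [:: s]).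

Definition extends (w : word) (s : letter) : Prop := in_Sub_tau (rcons w s).

Definition right_special (w : word) : Prop :=
  in_Sub_tau w /\ exists s1 s2 : letter, s1 <> s2 /\ extends w s1 /\ extends w s2.

Definition suffix_len (L : nat) (u : word) : word := drop (size u - L) u.

(* All words tau^n(a) are prefixes of one infinite word omega = a x a y a x a z ...,
   whose letter at position 2^v (2t+1) is a for v = 0 and tau^(v-1)(x) otherwise, and every
   word of Sub_tau is a factor of omega.  A right-special word of length L is therefore a
   factor with two occurrences followed by different letters.  Both occurrences are then
   followed by even positions, and since tau doubles positions of omega, for L >= 8 the pair
   desubstitutes to a pair of occurrences of a factor of length L/2; equal factors also lift
   back along tau.  By induction on n, starting from a finite check for 4 <= L < 8, a
   right-special factor of length 2^n <= L < 2^(n+1) ends at position 2^(n+1), where it is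
   the suffix of tau^n(a), or, only when L < 3 * 2^(n-1), at position 5 * 2^n, where it is
   the suffix of tau^(n-2)(a) tau^(n-2)(x) tau^(n-1)(a).  Reading off the letters that follow
   the occurrences of these two factors gives their extensions. *)

From mathcomp Require Import all_boot zify.

(* [tau [:: s] = [:: rho s]] for [s != la]; the value [rho la = lx] makes
   [omega i.*2 = rho (omega i)] hold for odd [i] as well. *)
Definition rho (s : letter) : letter :=
  match s with la => lx | lx => ly | ly => lz | lz => lx end.

Definition tau_x (n : nat) : letter := iter n rho lx.

(* Positions start at 1; [omega 0] is a junk value. *)
Definition omega (i : nat) : letter :=
  if odd i then la else tau_x (logn 2 i).-1.

Lemma rho_neq_a s : rho s != la. Proof. by case: s. Qed.

Lemma rho_neq s : rho s <> s. Proof. by case: s. Qed.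

Lemma rho_inj s t : s != la -> t != la -> rho s = rho t -> s = t.
Proof. by case: s; case: t. Qed.

Lemma tau_xS n : tau_x n.+1 = rho (tau_x n). Proof. by []. Qed.

Lemma tau_x_neq_a n : tau_x n != la.
Proof. by case: n => // n; rewrite tau_xS rho_neq_a. Qed.

Lemma tau_x_mod3 n : tau_x (n + 3) = tau_x n.
Proof. by rewrite /tau_x iterD /=; case: (iter n rho lx). Qed.

Lemma tau_x_cases n s : s != la -> [\/ s = tau_x n, s = tau_x n.+1 | s = tau_x n.+2].
Proof.
rewrite !tau_xS; have := tau_x_neq_a n.
by case: (tau_x n); case: s => //= _ _; constructor.
Qed.

Lemma omega_eq_a i : (omega i == la) = odd i.
Proof. by rewrite /omega; case: odd; rewrite ?eqxx ?(negbTE (tau_x_neq_a _)). Qed.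

Lemma omega_odd i : odd i -> omega i = la.
Proof. by move=> hi; apply/eqP; rewrite omega_eq_a. Qed.

Lemma omega_double i : 0 < i -> omega i.*2 = rho (omega i).
Proof.
move=> hi; rewrite /omega odd_double -mul2n lognM // (pfactorK 1) //=.
case: ifP => [odd_i|ev]; first by rewrite logn_coprime ?coprime2n.
have: 0 < logn 2 i by rewrite logn_gt0 mem_primes hi dvdn2 ev.
by case: (logn 2 i).
Qed.

Lemma omega_pow2_odd j t : omega (2 ^ j.+1 * t.*2.+1) = tau_x j.
Proof.
rewrite /omega oddM oddX /= lognM ?expn_gt0 // pfactorK //.
by rewrite logn_coprime ?addn0 // coprime2n /= odd_double.
Qed.

Lemma omega_pow2 j : omega (2 ^ j.+1) = tau_x j.
Proof. by have := omega_pow2_odd j 0; rewrite muln1. Qed.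

Lemma omega_periodic j t r : 0 < r -> r < 2 ^ j -> omega (2 ^ j * t + r) = omega r.
Proof.
elim: j r => [|j IH] r r_gt0 r_lt; first by rewrite expn0 in r_lt; lia.
have := odd_double_half r; case: (odd r) => /= r_eq.
  by rewrite -r_eq !omega_odd // oddD ?oddM ?oddX /= odd_double ?andbF.
have -> : 2 ^ j.+1 * t + r = (2 ^ j * t + r./2).*2 by rewrite expnS; lia.
rewrite [in RHS](_ : r = r./2.*2); last lia.
rewrite !omega_double ?IH //; rewrite ?expnS in r_lt; lia.
Qed.

Definition factor (p L : nat) : word := map omega (iota p L).

Lemma size_factor p L : size (factor p L) = L.
Proof. by rewrite size_map size_iota. Qed.

Lemma factor_eqP p p' L :
  factor p L = factor p' L <-> forall i, i < L -> omega (p + i) = omega (p' + i).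
Proof.
split=> [E i lt_iL|E].
  by have := congr1 (nth la ^~ i) E; rewrite !(nth_map 0) ?size_iota // !nth_iota.
apply: (eq_from_nth (x0 := la)); rewrite ?size_factor // => i lt_iL.
by rewrite !(nth_map 0) ?size_iota // !nth_iota // E.
Qed.

Lemma factorD p L M : factor p (L + M) = factor p L ++ factor (p + L) M.
Proof. by rewrite /factor iotaD map_cat. Qed.

Lemma factor1 p : factor p 1 = [:: omega p].
Proof. by []. Qed.

Lemma factorSr p L : factor p L.+1 = rcons (factor p L) (omega (p + L)).
Proof. by rewrite -addn1 factorD factor1 cats1. Qed.

Lemma factor_drop_take p N i L :
  i + L <= N -> take L (drop i (factor p N)) = factor (p + i) L.
Proof.
move=> le_N; rewrite /factor -map_drop -map_take drop_iota take_iota.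
by congr (map omega (iota _ _)); lia.
Qed.

Lemma suffix_len_factor p N L : L <= N -> suffix_len L (factor p N) = factor (p + N - L) L.
Proof.
move=> le_LN; rewrite /suffix_len size_factor /factor -map_drop drop_iota.
by congr (map omega (iota _ _)); lia.
Qed.

Lemma factor_periodic j t p L :
  0 < p -> p + L <= 2 ^ j -> factor (2 ^ j * t + p) L = factor p L.
Proof.
move=> p_gt0 le_pL; apply/factor_eqP => i lt_iL.
by rewrite -addnA omega_periodic //; lia.
Qed.

Lemma tau_cat s t : tau (s ++ t) = tau s ++ tau t.
Proof. by rewrite /tau map_cat flatten_cat. Qed.

Lemma tauN_cat n s t : tauN n (s ++ t) = tauN n s ++ tauN n t.
Proof. by elim: n => //= n IH; rewrite IH tau_cat. Qed.

Lemma tauNSr n w : tauN n.+1 w = tauN n (tau w).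
Proof. exact: iterSr. Qed.

Lemma tauN_neq_a n s : s != la -> tauN n [:: s] = [:: iter n rho s].
Proof.
elim: n s => // n IH s s_neq_a.
have tau_s : tau [:: s] = [:: rho s] by case: s s_neq_a.
by rewrite tauNSr tau_s IH ?rho_neq_a // iterSr.
Qed.

Lemma tauN_x n : tauN n [:: lx] = [:: tau_x n].
Proof. exact: tauN_neq_a. Qed.

Lemma tauN_aS n : tauN n.+1 [:: la] = tauN n [:: la] ++ [:: tau_x n] ++ tauN n [:: la].
Proof. by rewrite tauNSr (_ : tau [:: la] = [:: la] ++ [:: lx] ++ [:: la]) // !tauN_cat tauN_x. Qed.

Lemma tauN_a n : tauN n [:: la] = factor 1 (2 ^ n.+1 - 1).
Proof.
elim: n => [|n IH] //; rewrite tauN_aS IH.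
have pow_gt0 := expn_gt0 2 n.+1.
rewrite (_ : 2 ^ n.+2 - 1 = (2 ^ n.+1 - 1) + (1 + (2 ^ n.+1 - 1))); last by rewrite expnS; lia.
rewrite !factorD factor1 (_ : 1 + _ = 2 ^ n.+1 * 0.*2.+1); last lia.
by rewrite omega_pow2_odd -[_ + 1]/(2 ^ n.+1 * 1 + 1) factor_periodic //; lia.
Qed.

Lemma Sub_tau_factor p L : 0 < p -> in_Sub_tau (factor p L).
Proof.
move=> p_gt0; exists la, (p + L); rewrite tauN_a.
set N := 2 ^ (p + L).+1 - 1.
have le_N : p + L <= N by have := ltn_expl (p + L).+1 (isT : 1 < 2); rewrite /N; lia.
rewrite (_ : N = (p - 1) + (L + (N - (p - 1) - L))); last lia.
by rewrite !factorD (_ : 1 + (p - 1) = p) ?infix_infix //; lia.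
Qed.

Lemma letter_in_omega s : exists2 i, 0 < i & omega i = s.
Proof. by case: s; [exists 1 | exists 2 | exists 4 | exists 8]. Qed.

Lemma in_Sub_tauP w : in_Sub_tau w <-> exists2 p, 0 < p & w = factor p (size w).
Proof.
split=> [[s [n]]|[p p_gt0 ->]]; last exact: Sub_tau_factor.
case: (eqVneq s la) => [->|s_neq_a].
  rewrite tauN_a => /infixP [s1 [s2 E]]; exists (1 + size s1) => //.
  have sizeE := congr1 size E; rewrite !size_cat in sizeE.
  rewrite -(factor_drop_take _ (2 ^ n.+1 - 1)).
    by rewrite E drop_size_cat ?take_size_cat.
  by rewrite size_factor in sizeE; rewrite sizeE addnA leq_addr.
rewrite tauN_neq_a //; have [i i_gt0 <-] := letter_in_omega (iter n rho s).
by rewrite infixs1 => /orP [] /eqP ->; [exists 1 | exists i].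
Qed.

Lemma extendsP w s :
  extends w s <-> exists2 p, 0 < p & w = factor p (size w) /\ s = omega (p + size w).
Proof.
rewrite /extends in_Sub_tauP size_rcons; split=> [[p p_gt0]|[p p_gt0 [wE ->]]].
  by rewrite factorSr => /rcons_inj [-> ->]; exists p; rewrite ?size_factor.
by exists p => //; rewrite factorSr -wE.
Qed.

Lemma right_specialP w : right_special w <->
  exists p p', [/\ 0 < p, 0 < p', w = factor p (size w), w = factor p' (size w)
                 & omega (p + size w) <> omega (p' + size w)].
Proof.
split=> [[_ [s1 [s2 [s12 [/extendsP [p p_gt0 [wE s1E]] /extendsP [p' p'_gt0 [wE' s2E]]]]]]]|].
  by exists p, p'; split; rewrite // -s1E -s2E.
move=> [p [p' [p_gt0 p'_gt0 wE wE' neq]]]; split; first by apply/in_Sub_tauP; exists p.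
exists (omega (p + size w)), (omega (p' + size w)); split=> //.
by split; apply/extendsP; [exists p | exists p'].
Qed.

Lemma factor_eq_succ_parity p p' L :
  0 < L -> factor p L = factor p' L -> odd (p + L) = odd (p' + L).
Proof. by case: L => // L _ /factor_eqP E; rewrite !addnS /= -!omega_eq_a E. Qed.

Lemma special_pair_succ_even p p' L :
  0 < L -> factor p L = factor p' L -> omega (p + L) <> omega (p' + L) ->
  ~~ odd (p + L) /\ ~~ odd (p' + L).
Proof.
move=> L_gt0 E neq; have same_parity := factor_eq_succ_parity _ _ _ L_gt0 E.
by split; apply/negP => odd_succ; apply: neq;
  rewrite !omega_odd // ?same_parity // -same_parity.
Qed.

Lemma extends_factor_neq_a q L s :
  0 < L -> ~~ odd (q + L) -> extends (factor q L) s -> s != la.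
Proof.
move=> L_gt0 ev /extendsP [p _ []]; rewrite size_factor => E ->.
by rewrite omega_eq_a -(factor_eq_succ_parity _ _ _ L_gt0 E).
Qed.

Lemma omega_mod4 k : k %% 4 = 2 -> omega k = lx.
Proof. by move=> k_mod; rewrite (_ : k = 2 ^ 1 * (k %/ 4).*2.+1) ?omega_pow2_odd //; lia. Qed.

(* [rho] identifies only [la] and [lz]; a position congruent to 2 mod 4 carries [lx],
   which forces [g] and [g'] to have the same parity, hence the same [la]-positions. *)
Lemma factor_eq_rho g g' m : 4 <= m ->
  (forall i, i < m -> rho (omega (g + i)) = rho (omega (g' + i))) -> factor g m = factor g' m.
Proof.
move=> m_ge4 E.
have same_parity : odd g = odd g'.
  apply/eqP; apply: contraT => neq; pose i := (6 - g %% 4) %% 4.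
  have gi_mod4 : (g + i) %% 4 = 2 by rewrite /i; lia.
  have odd_g'i : odd (g' + i) by lia.
  have i_lt : i < m by rewrite /i; lia.
  by have := E i i_lt; rewrite omega_mod4 // omega_odd.
apply/factor_eqP => i lt_im; case odd_gi: (odd (g + i)).
  by rewrite !omega_odd //; lia.
by apply: rho_inj (E i lt_im); rewrite omega_eq_a; lia.
Qed.

Lemma special_pair_halve p p' L : 8 <= L -> 0 < p -> 0 < p' ->
  factor p L = factor p' L -> omega (p + L) <> omega (p' + L) ->
  exists g g', [/\ p + odd L = g.*2, p' + odd L = g'.*2,
                   factor g L./2 = factor g' L./2 & omega (g + L./2) <> omega (g' + L./2)].
Proof.
move=> L_ge8 p_gt0 p'_gt0 E neq.
have [|ev ev'] := special_pair_succ_even _ _ _ _ E neq; first lia.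
have L_eq := odd_double_half L; have pL := odd_double_half (p + L).
have p'L := odd_double_half (p' + L).
move: (odd L) (L./2) ((p + L)./2) ((p' + L)./2) L_eq pL p'L => d m f f' L_eq pL p'L.
rewrite (negbTE ev) in pL; rewrite (negbTE ev') in p'L; subst L.
have rho_at q F i : 0 < q -> q + (d + m.*2) = F.*2 -> i <= m ->
    omega (q + (d + i.*2)) = rho (omega (F - m + i)).
  by move=> q_gt0 qE le_im; rewrite -omega_double; [congr omega|]; lia.
exists (f - m), (f' - m); split; [lia | lia | apply: factor_eq_rho; first lia|].
  move=> i lt_im; rewrite -(rho_at p f i) -?(rho_at p' f' i) //; try lia.
  by move/factor_eqP: E; apply; lia.
move=> succ_eq; apply: neq.
by rewrite (rho_at p f m) ?(rho_at p' f' m) ?succ_eq //; lia.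
Qed.

Lemma factor_eq_double g g' m d : 0 < g -> 0 < g' -> d <= 1 ->
  factor g m = factor g' m -> factor (g.*2 - d) (d + m.*2) = factor (g'.*2 - d) (d + m.*2).
Proof.
move=> g_gt0 g'_gt0 d_le1 /factor_eqP E; apply/factor_eqP => i lt_i.
case odd_i: (odd (g.*2 - d + i)); first by rewrite !omega_odd //; lia.
rewrite (_ : g.*2 - d + i = (g + (i - d)./2).*2); last lia.
rewrite (_ : g'.*2 - d + i = (g' + (i - d)./2).*2); last lia.
by rewrite !omega_double ?E //; lia.
Qed.

(* By [omega_periodic], [omega] on the positions [p + i], [i < 8], is determined by
   [p %% 8] and the letter [s] at the multiple of 8 among them. *)
Definition window (r : nat) (s : letter) (i : nat) : letter :=
  if (r + i) %% 8 == 0 then s else omega ((r + i) %% 8).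

Definition window_word (r : nat) (s : letter) (L : nat) : word := map (window r s) (iota 0 L).

Lemma omega_window p : exists2 s, s != la & forall i, i < 8 -> omega (p + i) = window (p %% 8) s i.
Proof.
exists (omega (p + (8 - p %% 8) %% 8)); first by rewrite omega_eq_a; lia.
move=> i lt_i8; rewrite /window; case: eqP => [rE|rE]; first by congr omega; lia.
by rewrite (_ : p + i = 2 ^ 3 * ((p + i) %/ 8) + (p %% 8 + i) %% 8) ?omega_periodic //; lia.
Qed.

Lemma factor_window q t L : L <= 8 ->
  (forall i, i < 8 -> omega (q + i) = window (q %% 8) t i) -> factor q L = window_word (q %% 8) t L.
Proof.
move=> le_L8 hq; rewrite /factor -{1}[q]addn0 iotaDl -map_comp.
by apply/eq_in_map => i; rewrite mem_iota /= => lt_i; apply: hq; lia.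
Qed.

(* The factors ending at positions [2^(n+1)] and [5 * 2^n] are the suffixes of [tau^n(a)]
   and of [tau^(n-2)(a) tau^(n-2)(x) tau^(n-1)(a)]. *)
Definition special_pairs (n : nat) : Prop :=
  forall L p p', 2 ^ n <= L < 2 ^ n.+1 -> 0 < p -> 0 < p' ->
  factor p L = factor p' L -> omega (p + L) <> omega (p' + L) ->
  factor p L = factor (2 ^ n.+1 - L) L \/
  [/\ L < 3 * 2 ^ n.-1, factor p L = factor (5 * 2 ^ n - L) L & omega (p + L) <> tau_x n].

Definition base_check : bool :=
  all (fun L => all (fun r => all (fun s => all (fun r' => all (fun s' =>
    (window_word r s L == window_word r' s' L) && (window r s L != window r' s' L) ==>
    (window_word r s L == factor (8 - L) L) ||
    [&& L < 6, window_word r s L == factor (20 - L) L & window r s L != lz])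
  [:: lx; ly; lz]) (iota 0 8)) [:: lx; ly; lz]) (iota 0 8)) (iota 4 4).

Lemma base_check_ok : base_check.
Proof. by vm_compute. Qed.

Lemma special_pairs_base : special_pairs 2.
Proof.
move=> L p p' /andP [L_ge4 L_lt8] _ _ E neq.
have [s s_a hs] := omega_window p; have [s' s'_a hs'] := omega_window p'.
have L_in : L \in iota 4 4 by rewrite mem_iota; lia.
have r_in q : q %% 8 \in iota 0 8 by rewrite mem_iota; lia.
have s_in t : t != la -> t \in [:: lx; ly; lz] by case: t.
move: base_check_ok => /allP /(_ L L_in) /allP /(_ _ (r_in p)) /allP /(_ _ (s_in s s_a)).
move=> /allP /(_ _ (r_in p')) /allP /(_ _ (s_in s' s'_a)) /implyP check.
rewrite -!(factor_window _ _ _ (ltnW L_lt8)) // -hs // -hs' // -E eqxx in check.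
case/orP: (check (introN eqP neq)) => [/eqP|/and3P [L_lt6 /eqP E20 /eqP]];
  [by left | by right].
Qed.

Lemma special_pairs_step n : 2 <= n -> special_pairs n -> special_pairs n.+1.
Proof.
move=> n_ge2 IH L p p' /andP [L_ge L_lt] p_gt0 p'_gt0 E neq.
have pow4 : 4 <= 2 ^ n by rewrite (_ : 4 = 2 ^ 2) // leq_exp2l.
have powS : 2 ^ n.+1 = 2 * 2 ^ n by rewrite expnS.
have powSS : 2 ^ n.+2 = 4 * 2 ^ n by rewrite !expnS mulnA.
have [|g [g' [pE p'E E' neq']]] := special_pair_halve _ _ _ _ p_gt0 p'_gt0 E neq; first lia.
have [|ev _] := special_pair_succ_even _ _ _ _ E' neq'; first lia.
have := odd_double_half L; move: (odd L) (L./2) pE p'E E' neq' ev => d m pE p'E E' neq' ev L_eq.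
subst L; have p_eq : p = g.*2 - d by lia.
have lift q : 0 < q -> factor g m = factor q m ->
    factor p (d + m.*2) = factor (q.*2 - d) (d + m.*2).
  by move=> q_gt0 Eq; rewrite p_eq; apply: factor_eq_double => //; lia.
have g_gt0 : 0 < g by lia.
have powP : 2 ^ n = 2 * 2 ^ n.-1 by rewrite -expnS prednK ?(ltn_trans _ n_ge2).
have [||H|[m_lt H2 H3]] := IH m g g' _ g_gt0 _ E' neq'; [lia | lia | |].
  by left; rewrite (lift _ _ H); [congr factor | ]; lia.
right; split; first by rewrite /=; lia.
  by rewrite (lift _ _ H2); [congr factor | ]; lia.
rewrite (_ : p + (d + m.*2) = (g + m).*2) ?omega_double ?tau_xS; try lia.
by move=> rhoE; apply/H3/(rho_inj _ _ _ _ rhoE); rewrite ?omega_eq_a ?tau_x_neq_a.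
Qed.

Lemma special_pairs_ge2 n : 2 <= n -> special_pairs n.
Proof.
elim: n => // n IH; rewrite leq_eqVlt => /orP [/eqP <-|n_ge2].
  exact: special_pairs_base.
exact: special_pairs_step (IH n_ge2).
Qed.

Lemma suffix_tauN_a n L : L < 2 ^ n.+1 -> suffix_len L (tauN n [:: la]) = factor (2 ^ n.+1 - L) L.
Proof. by move=> L_lt; rewrite tauN_a suffix_len_factor; [congr factor | ]; lia. Qed.

Lemma factor_tauN_axa k t :
  omega (2 ^ k.+1 * t.+1) = tau_x k -> omega (2 ^ k.+1 * t.+2) = tau_x k ->
  tauN k [:: la] ++ tauN k [:: lx] ++ tauN k.+1 [:: la] =
    factor (2 ^ k.+1 * t + 1) (3 * 2 ^ k.+1 - 1).
Proof.
move=> at1 at2; have B_gt0 := expn_gt0 2 k.+1; set B := 2 ^ k.+1 in at1 at2 B_gt0 *.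
rewrite tauN_aS tauN_a tauN_x -/B.
rewrite (_ : 3 * B - 1 = (B - 1) + (1 + ((B - 1) + (1 + (B - 1))))); last lia.
rewrite !factorD !factor1 (_ : B * t + 1 + (B - 1) = B * t.+1); last lia.
rewrite (_ : B * t.+1 + 1 + (B - 1) = B * t.+2); last lia.
by rewrite at1 at2 !factor_periodic //; lia.
Qed.

Lemma tauN_axa_factor7 k :
  tauN k [:: la] ++ tauN k [:: lx] ++ tauN k.+1 [:: la] =
    factor (2 ^ k.+1 * 7 + 1) (3 * 2 ^ k.+1 - 1).
Proof.
apply: factor_tauN_axa; first by rewrite (_ : 8 = 2 ^ 3) // -expnD addSn omega_pow2 tau_x_mod3.
exact: (omega_pow2_odd k 4).
Qed.

Lemma tauN_axa_factor6 k :
  tauN k [:: la] ++ tauN k [:: lx] ++ tauN k.+1 [:: la] =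
    factor (2 ^ k.+1 * 6 + 1) (3 * 2 ^ k.+1 - 1).
Proof.
apply: factor_tauN_axa; first exact: (omega_pow2_odd k 3).
by rewrite (_ : 8 = 2 ^ 3) // -expnD addSn omega_pow2 tau_x_mod3.
Qed.

Section FactorsOfLengthL.

Variables n L : nat.
Hypotheses (n_ge2 : 2 <= n) (L_ge : 2 ^ n <= L) (L_lt : L < 2 ^ n.+1).

Let pow2S : 2 ^ n.+1 = 2 * 2 ^ n. Proof. exact: expnS. Qed.
Let pow2P : 2 ^ n = 2 * 2 ^ n.-1. Proof. by rewrite -expnS prednK // ltnW. Qed.
Let pow2_sub2 : 2 ^ (n - 2).+1 = 2 ^ n.-1. Proof. by congr expn; lia. Qed.

Local Notation w1 := (factor (2 ^ n.+1 - L) L).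
Local Notation w2 := (factor (5 * 2 ^ n - L) L).

Lemma factor_end_pow2 j : n < j -> factor (2 ^ j - L) L = w1.
Proof.
move=> lt_nj; have pow_le : 2 ^ n.+1 <= 2 ^ j by rewrite leq_exp2l.
have X_gt0 := expn_gt0 2 (j - n.+1).
rewrite (_ : 2 ^ j - L = 2 ^ n.+1 * (2 ^ (j - n.+1) - 1) + (2 ^ n.+1 - L)).
  by rewrite factor_periodic //; lia.
by rewrite mulnBr muln1 -expnD subnKC //; lia.
Qed.

Lemma extends_w1 s : extends w1 s <-> s != la.
Proof.
split; first by apply: extends_factor_neq_a; lia.
have at_pow j : n <= j -> extends w1 (tau_x j).
  move=> le_nj; have pow_le : 2 ^ n.+1 <= 2 ^ j.+1 by rewrite leq_exp2l.
  apply/extendsP; exists (2 ^ j.+1 - L); first lia.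
  by rewrite size_factor factor_end_pow2 // subnK ?omega_pow2 //; lia.
by move=> /(tau_x_cases n) [] ->; apply: at_pow; lia.
Qed.

Lemma right_special_w1 : right_special w1.
Proof.
split; first by apply: Sub_tau_factor; lia.
by exists lx, ly; split => //; split; apply/extends_w1.
Qed.

Lemma w1_neq_w2 : w1 <> w2.
Proof.
move/factor_eqP => E; have n_gt0 : 0 < n by lia.
have idx_lt : L - 2 ^ n < L by lia.
have := E _ idx_lt.
rewrite (_ : 2 ^ n.+1 - L + (L - 2 ^ n) = 2 ^ n.-1.+1); last by rewrite prednK //; lia.
rewrite (_ : 5 * 2 ^ n - L + (L - 2 ^ n) = 2 ^ n.+2); last by rewrite expnS; lia.
by rewrite !omega_pow2 -[in tau_x n.+1](prednK n_gt0) !tau_xS; case: (tau_x n.-1).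
Qed.

Lemma suffix_tauN_axa : L < 3 * 2 ^ n.-1 ->
  suffix_len L (tauN (n - 2) [:: la] ++ tauN (n - 2) [:: lx] ++ tauN (n - 1) [:: la]) = w2.
Proof.
move=> L_small; rewrite (_ : n - 1 = (n - 2).+1); last lia.
by rewrite tauN_axa_factor7 suffix_len_factor pow2_sub2; [congr factor | ]; lia.
Qed.

Lemma factor_end_9 : L < 3 * 2 ^ n.-1 -> factor (9 * 2 ^ n.-1 - L) L = w2.
Proof.
move=> L_small; have := congr1 (suffix_len L) (tauN_axa_factor6 (n - 2)).
rewrite tauN_axa_factor7 !suffix_len_factor pow2_sub2; try lia.
move=> E; rewrite (_ : 9 * _ - L = 2 ^ n.-1 * 6 + 1 + (3 * 2 ^ n.-1 - 1) - L) -?E.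
  by congr factor; lia.
lia.
Qed.

Lemma omega_5pow2 : omega (5 * 2 ^ n) = tau_x (n - 1).
Proof. by rewrite -(omega_pow2_odd (n - 1) 2); congr omega; rewrite (_ : (n - 1).+1 = n); lia. Qed.

Lemma extends_w2_n1 : extends w2 (tau_x (n - 1)).
Proof.
apply/extendsP; exists (5 * 2 ^ n - L); rewrite ?size_factor; first lia.
by rewrite subnK ?omega_5pow2 //; lia.
Qed.

Lemma extends_w2_n2 : L < 3 * 2 ^ n.-1 -> extends w2 (tau_x (n - 2)).
Proof.
move=> L_small; apply/extendsP; exists (9 * 2 ^ n.-1 - L); first lia.
rewrite size_factor factor_end_9 // subnK -?(omega_pow2_odd (n - 2) 4) ?pow2_sub2; last lia.
by split=> //; congr omega; lia.
Qed.

Lemma right_special_w2 : L < 3 * 2 ^ n.-1 -> right_special w2.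
Proof.
move=> L_small; split; first by apply: Sub_tau_factor; lia.
exists (tau_x (n - 2)), (tau_x (n - 1)).
split; last by split; [apply: extends_w2_n2 | apply: extends_w2_n1].
by rewrite (_ : n - 1 = (n - 2).+1) ?tau_xS; [apply/nesym/rho_neq | lia].
Qed.

Lemma extends_w2 s : L < 3 * 2 ^ n.-1 ->
  extends w2 s <-> s = tau_x (n - 2) \/ s = tau_x (n - 1).
Proof.
move=> L_small; split=> [ext|[->|->]]; last exact: extends_w2_n1; last exact: extends_w2_n2.
have s_neq_a : s != la by apply: (extends_factor_neq_a _ _ _ _ _ ext); lia.
have n1E : n - 1 = (n - 2).+1 by lia.
rewrite n1E; have [->|->|sE] := tau_x_cases (n - 2) _ s_neq_a; [by left | by right | exfalso].
move/extendsP: ext => [p p_gt0 []]; rewrite size_factor => /esym E succE.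
have [|||w1E|[_ _]] := special_pairs_ge2 _ n_ge2 L p (5 * 2 ^ n - L) _ p_gt0 _ E _.
- lia.
- lia.
- by rewrite -succE subnK ?omega_5pow2 ?n1E ?sE ?tau_xS; [apply: rho_neq | lia].
- by apply: w1_neq_w2; rewrite -w1E E.
by rewrite -succE sE (_ : (n - 2).+2 = n) //; lia.
Qed.

Lemma right_special_iff w : size w = L ->
  right_special w <-> w = w1 \/ L < 3 * 2 ^ n.-1 /\ w = w2.
Proof.
move=> wL; split=> [|[->|[L_small ->]]]; last exact: right_special_w2; last exact: right_special_w1.
move=> /right_specialP [p [p' []]]; rewrite wL => p_gt0 p'_gt0 wE wE' neq.
have [|w1E|[L_small w2E _]] :=
  special_pairs_ge2 _ n_ge2 L p p' _ p_gt0 p'_gt0 (etrans (esym wE) wE') neq; first lia.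
  by left; rewrite wE.
by right; rewrite wE.
Qed.

End FactorsOfLengthL.

Theorem theorem2 (n k : nat) (hn : 2 <= n) (hk : k < 2 ^ n) :
  let L := 2 ^ n + k in
  let w1 := suffix_len L (tauN n [:: la]) in
  let w2 := suffix_len L (tauN (n - 2) [:: la] ++ tauN (n - 2) [:: lx]
                          ++ tauN (n - 1) [:: la]) in
  (k < 2 ^ (n - 1) ->
     w1 <> w2 /\
     (forall w : word, size w = L -> (right_special w <-> w = w1 \/ w = w2)) /\
     (forall s : letter, extends w1 s <-> s = lx \/ s = ly \/ s = lz) /\
     (forall s : letter, extends w2 s <->
        [:: s] = tauN (n - 2) [:: lx] \/ [:: s] = tauN (n - 1) [:: lx])) /\
  (2 ^ (n - 1) <= k ->
     (forall w : word, size w = L -> (right_special w <-> w = w1)) /\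
     (forall s : letter, extends w1 s <-> s = lx \/ s = ly \/ s = lz)).
Proof.
move=> L w1 w2; have pow2P : 2 ^ n = 2 * 2 ^ n.-1 by rewrite -expnS prednK // ltnW.
have L_ge : 2 ^ n <= L by rewrite leq_addr.
have L_lt : L < 2 ^ n.+1 by rewrite expnS; lia.
have w1E : w1 = factor (2 ^ n.+1 - L) L by apply: suffix_tauN_a.
have ext_w1 s : extends w1 s <-> s = lx \/ s = ly \/ s = lz.
  by rewrite w1E extends_w1 //; case: s; intuition.
rewrite subn1; split=> [k_small | k_large].
  have L_small : L < 3 * 2 ^ n.-1 by lia.
  rewrite /w2 (suffix_tauN_axa _ _ hn L_ge L_lt L_small) w1E.
  split; first exact: w1_neq_w2.
  split; first by move=> w wL; rewrite (right_special_iff _ _ hn L_ge L_lt _ wL); intuition.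
  split; first by rewrite -w1E.
  move=> s; rewrite !tauN_x (extends_w2 _ _ hn L_ge L_lt _ L_small).
  by rewrite subn1; split=> [[->|->]|[[->]|[->]]]; auto.
split=> // w wL; rewrite (right_special_iff _ _ hn L_ge L_lt _ wL) -w1E; intuition lia.
Qed.
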